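(* Let $\mathcal D$ be a distribution of $(p,y)\in[0,1]\times\{0,1\}$ and $m^*=m^*(\mathcal D)$. If $m^*=+\infty$, then $\mathsf{SCDL}(\mathcal D)=0$. If $m^*<+\infty$, then (1) $\mathsf{SCDL}(\mathcal D)=\max\{\mathsf{SCDL}_{m^*}(\mathcal D),1/m^*\}\in[1/m^*,2/m^* )$, and (2) $\mathsf{SCDL}_{2m^*}(\mathcal D)\ge\mathsf{SCDL}(\mathcal D)$.
   Context: For $x\in\mathbb R$ write $x_+=\max\{x,0\}$. For a distribution $\mathcal D$ of $(p,y)\in[0,1]\times\{0,1\}$, a positive integer $m$ and $i\in\{0,\ldots,m\}$, let $w_i(p)=(1-|mp-i|)_+$, $\pi_i=\mathbb E_{\mathcal D}[w_i(p)]$ and $q_i=\mathbb E_{\mathcal D}[w_i(p)y]/\pi_i$ (terms with $\pi_i=0$ are $0$). Define $$\mathsf{SCDL}_m(\mathcal D)=\max_{i=0,\ldots,m}\Big(\sum_{j=0}^{i}\pi_j\big(q_j-\tfrac{i+1}{m}\big)_+ +\sum_{j=i+1}^{m}\pi_j\big(\tfrac im-q_j\big)_+\Big),\quad \mathsf{SCDL}(\mathcal D)=\inf_{m\in\{2^1,2^2,\ldots\}}\max\{\mathsf{SCDL}_m(\mathcal D),1/m\}.$$ $m^*(\mathcal D)$ is the smallest $m\in\{2^1,2^2,\ldots\}$ such that $\mathsf{SCDL}_{2m}(\mathcal D)\ge1/m$, and $m^*(\mathcal D)=+\infty$ if no such $m$ exists. *)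

From HB Require Import structures.
From mathcomp Require Import all_boot all_order all_algebra.
From mathcomp Require Import all_classical all_reals all_analysis.
Set Implicit Arguments. Unset Strict Implicit. Unset Printing Implicit Defensive.
Import Order.TTheory GRing.Theory Num.Theory.
Import numFieldNormedType.Exports.
Local Open Scope classical_set_scope.
Local Open Scope ring_scope.

(* A distribution D of (p,y) in [0,1] x {0,1} is represented as the joint law
   of a pair of random variables (p, y) on a probability space (T, P). *)

Section SCDL.
Context {d : measure_display} {T : measurableType d} {R : realType}.

Definition pos_part (x : R) : R := Num.max x 0.

Definition wgt (m i : nat) (t : R) : R := pos_part (1 - `|m%:R * t - i%:R|).

Definition Exp (P : probability T R) (f : T -> R) : R :=
  fine (\int[P]_x (f x)%:E)%E.

Definition pi_ (P : probability T R) (p : T -> R) (m i : nat) : R :=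
  Exp P (fun x => wgt m i (p x)).

Definition q_ (P : probability T R) (p y : T -> R) (m i : nat) : R :=
  if pi_ P p m i == 0 then 0
  else Exp P (fun x => wgt m i (p x) * y x) / pi_ P p m i.

Definition SCDL_m (P : probability T R) (p y : T -> R) (m : nat) : R :=
  \big[Num.max/0]_(0 <= i < m.+1)
    ( \sum_(0 <= j < i.+1)
         pi_ P p m j * pos_part (q_ P p y m j - i.+1%:R / m%:R)
    + \sum_(i.+1 <= j < m.+1)
         pi_ P p m j * pos_part (i%:R / m%:R - q_ P p y m j)).

Definition SCDL (P : probability T R) (p y : T -> R) : R :=
  inf [set v : R | exists2 k : nat, (0 < k)%N &
         v = Num.max (SCDL_m P p y (2 ^ k)%N) (1 / (2 ^ k)%:R)].

Definition is_mstar (P : probability T R) (p y : T -> R) (m : nat) : Prop :=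
  (exists2 k : nat, (0 < k)%N & m = (2 ^ k)%N) /\
  1 / m%:R <= SCDL_m P p y (2 * m)%N /\
  (forall k : nat, (0 < k)%N -> (2 ^ k < m)%N ->
     SCDL_m P p y (2 * 2 ^ k)%N < 1 / (2 ^ k)%:R).

Definition mstar_infinite (P : probability T R) (p y : T -> R) : Prop :=
  forall k : nat, (0 < k)%N -> SCDL_m P p y (2 * 2 ^ k)%N < 1 / (2 ^ k)%:R.

End SCDL.

From mathcomp Require Import all_boot all_order all_algebra.
From mathcomp Require Import all_classical all_reals all_analysis.
From mathcomp Require Import measurable_realfun ring lra zify.
Import Order.TTheory GRing.Theory Num.Theory.
Local Open Scope ring_scope.

(* The hat functions of mesh 1/m are averages of those of mesh 1/(2m): on [0, 1],
   w^m_j = w^{2m}_{2j} + (w^{2m}_{2j-1} + w^{2m}_{2j+1}) / 2, because the hat function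
   is the second difference of the ramp x_+ and the ramp is positively homogeneous.
   Hence pi_j and pi_j q_j at mesh 1/m are the same averages of their values at mesh
   1/(2m), and by sublinearity of x_+ the i-th term of SCDL_m is at most the mean of
   the (2i)-th and (2i+1)-th terms of SCDL_{2m}; so SCDL_m <= SCDL_{2m}.
   Along m = 2^k the infimum defining SCDL is therefore attained at m*: minimality
   of m* (or SCDL_2 <= 1/2 when m* = 2) gives SCDL_{m*} < 2/m*, so for m < m* the
   term 1/m >= 2/m* exceeds max{SCDL_{m*}, 1/m*}, while for m > m* monotonicity gives
   SCDL_m >= SCDL_{2m*} >= max{SCDL_{m*}, 1/m*}. When m* is infinite,
   max{SCDL_{2m}, 1/(2m)} < 1/m for every m, so the infimum is 0. *)

Section PosPart.
Context {R : realType}.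
Implicit Types a x y : R.

Lemma pos_part_ge0 x : 0 <= pos_part x.
Proof. by rewrite /pos_part le_max lexx orbT. Qed.

Lemma pos_part_ge x : x <= pos_part x.
Proof. by rewrite /pos_part le_max lexx. Qed.

Lemma pos_part_le x y : x <= y -> 0 <= y -> pos_part x <= y.
Proof. by rewrite /pos_part ge_max => -> ->. Qed.

Lemma le_pos_part x y : x <= y -> pos_part x <= pos_part y.
Proof.
by move=> xy; rewrite pos_part_le ?pos_part_ge0 // (le_trans xy (pos_part_ge y)).
Qed.

Lemma pos_part_eq0 x : x <= 0 -> pos_part x = 0.
Proof. by move=> x0; apply/le_anti; rewrite pos_part_le ?pos_part_ge0. Qed.

Lemma pos_partZ a x : 0 <= a -> pos_part (a * x) = a * pos_part x.
Proof. by move=> a0; rewrite /pos_part maxr_pMr // mulr0. Qed.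

Lemma pos_partD_le x y : pos_part (x + y) <= pos_part x + pos_part y.
Proof.
by rewrite pos_part_le ?addr_ge0 ?pos_part_ge0 // lerD ?pos_part_ge.
Qed.

Definition hat (u : R) : R := pos_part (1 - `|u|).

Lemma hat_eq0 u : 1 <= `|u| -> hat u = 0.
Proof. by move=> u1; rewrite /hat pos_part_eq0 // subr_le0. Qed.

Lemma hat_ge0 u : 0 <= hat u.
Proof. exact: pos_part_ge0. Qed.

Lemma hat_le1 u : hat u <= 1.
Proof. by rewrite pos_part_le // gerBl. Qed.

Lemma hatE u : hat u = pos_part (u + 1) - 2 * pos_part u + pos_part (u - 1).
Proof.
rewrite /hat /pos_part !maxEle.
have [u0|u0] := leP 0 u; [rewrite ger0_norm // | rewrite ltr0_norm //];
  by repeat case: ifP => /= ?; lra.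
Qed.

Lemma hat_coarsen u :
  hat u = hat (2 * u) + (hat (2 * u + 1) + hat (2 * u - 1)) / 2.
Proof.
have ramp2 (v : R) : pos_part (2 * v) = 2 * pos_part v by rewrite pos_partZ.
rewrite !hatE addrK subrK.
rewrite (_ : 2 * u + 1 + 1 = 2 * (u + 1)); last ring.
rewrite (_ : 2 * u - 1 - 1 = 2 * (u - 1)); last ring.
rewrite !ramp2; lra.
Qed.
End PosPart.

Section Coarsen.
Context {R : realType}.
Implicit Types (a b h : nat -> R).

(* [coarsen h j = h (2j) + (h (2j - 1) + h (2j + 1)) / 2], without the h (-1) term
   for j = 0. *)
Definition coarsen h j : R :=
  if j is j'.+1 then h (2 * j').+2 + (h (2 * j').+1 + h (2 * j').+3) / 2
  else h 0%N + h 1%N / 2.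

Lemma coarsen_pos_part h j :
  pos_part (coarsen h j) <= coarsen (fun k => pos_part (h k)) j.
Proof.
have half (x : R) : pos_part (x / 2) = pos_part x / 2 by rewrite mulrC pos_partZ 1?mulrC.
case: j => [|j] /=; apply: le_trans (pos_partD_le _ _) _; rewrite half lerD //.
by rewrite ler_wpM2r ?invr_ge0 ?ler0n ?pos_partD_le.
Qed.

Lemma sum_coarsen h n :
  \sum_(0 <= j < n.+1) coarsen h j = \sum_(0 <= k < (2 * n).+1) h k + h (2 * n).+1 / 2.
Proof.
elim: n => [|n IHn]; first by rewrite !big_nat1.
by rewrite big_nat_recr //= IHn mulnS !big_nat_recr //=; lra.
Qed.

Lemma sum_coarsen_gt h i n : (i < n)%N ->
  \sum_(i.+1 <= j < n.+1) coarsen h j =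
  h (2 * i).+1 / 2 + \sum_((2 * i).+2 <= k < (2 * n).+1) h k + h (2 * n).+1 / 2.
Proof.
move=> lt_in; have := sum_coarsen h n.
rewrite [\sum_(0 <= j < n.+1) _](@big_cat_nat _ _ _ i.+1) //= 1?ltnW //.
rewrite [\sum_(0 <= k < (2 * n).+1) _](@big_cat_nat _ _ _ (2 * i).+1) //=; last by lia.
by rewrite sum_coarsen [\sum_((2 * i).+1 <= k < _) _]big_ltn /=; [lra | lia].
Qed.

(* [a j] and [b j] stand for pi_j and pi_j q_j: multiplying the j-th term of
   SCDL_m by pi_j removes the division hidden in q_j. *)
Definition scdl_at (m : nat) a b (i : nat) : R :=
  \sum_(0 <= j < i.+1) pos_part (b j - i.+1%:R / m%:R * a j)
  + \sum_(i.+1 <= j < m.+1) pos_part (i%:R / m%:R * a j - b j).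

Definition scdl_max (m : nat) a b : R :=
  \big[Num.max/0]_(0 <= i < m.+1) scdl_at m a b i.

Lemma scdl_at_last m a b : (0 < m)%N -> (forall j, 0 <= b j <= a j) ->
  scdl_at m a b m = 0.
Proof.
move=> m_gt0 ba; rewrite /scdl_at [X in _ + X]big_geq // addr0 big1 // => j _.
have /andP[b0 le_ba] := ba j.
have c1 : 1 <= m.+1%:R / m%:R :> R by rewrite ler_pdivlMr ?ltr0n // mul1r ler_nat.
by rewrite pos_part_eq0 // subr_le0 (le_trans le_ba) // ler_peMl // (le_trans b0).
Qed.

Lemma scdl_max_ge0 m a b : 0 <= scdl_max m a b.
Proof. exact: bigmax_ge_id. Qed.

Lemma scdl_at_le_max m a b i : (i <= m)%N -> scdl_at m a b i <= scdl_max m a b.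
Proof. by move=> im; rewrite /scdl_max (le_bigmax_seq _ _ _ _) ?mem_index_iota. Qed.

Section CoarsenMonotone.
Variables (a b : nat -> R) (m : nat).
Hypotheses (m_gt0 : (0 < m)%N) (ba : forall k, 0 <= b k <= a k)
  (a_top : a (2 * m).+1 = 0).

Lemma coarsen_bounds j : 0 <= coarsen b j <= coarsen a j.
Proof.
case: j => [|j] /=.
  by move: (ba 0%N) (ba 1%N) => /andP[? ?] /andP[? ?]; apply/andP; split; lra.
move: (ba (2 * j).+1) (ba (2 * j).+2) (ba (2 * j).+3).
by move=> /andP[? ?] /andP[? ?] /andP[? ?]; apply/andP; split; lra.
Qed.

Lemma scdl_at_coarsen i : (i < m)%N ->
  scdl_at m (coarsen a) (coarsen b) i <=
  Num.max (scdl_at (2 * m) a b (2 * i)) (scdl_at (2 * m) a b (2 * i).+1).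
Proof.
move=> lt_im.
have a_ge0 k : 0 <= a k by have /andP[b0 ba_k] := ba k; apply: le_trans ba_k.
set c : R := i.+1%:R / m%:R; set d : R := i%:R / m%:R.
pose f k := pos_part (b k - c * a k); pose g k := pos_part (d * a k - b k).
have mR : (m%:R : R) != 0 by rewrite pnatr_eq0 -lt0n.
have c2 : (2 * i).+2%:R / (2 * m)%:R = c :> R.
  by rewrite (_ : (2 * i).+2 = 2 * i.+1)%N ?natrM /c; [field; rewrite mR | lia].
have d2 : (2 * i)%:R / (2 * m)%:R = d :> R by rewrite !natrM /d; field; rewrite mR.
have f_le t k : t <= c -> f k <= pos_part (b k - t * a k).
  by move=> tc; apply: le_pos_part; have := ler_wpM2r (a_ge0 k) tc; lra.
have g_le t k : d <= t -> g k <= pos_part (t * a k - b k).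
  by move=> dt; apply: le_pos_part; have := ler_wpM2r (a_ge0 k) dt; lra.
have g_top : g (2 * m).+1 = 0.
  have /andP[b0 _] := ba (2 * m).+1.
  by rewrite /g a_top mulr0 pos_part_eq0 // sub0r oppr_le0.
pose F := \sum_(0 <= k < (2 * i).+1) f k.
pose G := \sum_((2 * i).+2 <= k < (2 * m).+1) g k.
have coarse_le :
    scdl_at m (coarsen a) (coarsen b) i <= F + (f (2 * i).+1 + g (2 * i).+1) / 2 + G.
  have -> : F + (f (2 * i).+1 + g (2 * i).+1) / 2 + G =
      \sum_(0 <= j < i.+1) coarsen f j + \sum_(i.+1 <= j < m.+1) coarsen g j.
    by rewrite sum_coarsen sum_coarsen_gt // g_top /F /G; lra.
  apply: lerD; apply: ler_sum_nat => j _; apply: le_trans (coarsen_pos_part _ _).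
    by apply: le_pos_part; case: j => [|j] /=; rewrite /c; lra.
  by apply: le_pos_part; case: j => [|j] /=; rewrite /d; lra.
have even_le : F + g (2 * i).+1 + G <= scdl_at (2 * m) a b (2 * i).
  rewrite /scdl_at [\sum_((2 * i).+1 <= j < _) _]big_ltn; last by lia.
  rewrite d2 -addrA lerD2r; apply: ler_sum_nat => k _; apply: f_le.
  by rewrite -c2 ler_wpM2r ?invr_ge0 ?ler0n ?ler_nat.
have odd_le : F + f (2 * i).+1 + G <= scdl_at (2 * m) a b (2 * i).+1.
  rewrite /scdl_at c2 [X in _ <= X + _]big_nat_recr //= lerD //.
  apply: ler_sum_nat => k _; apply: g_le.
  by rewrite -d2 ler_wpM2r ?invr_ge0 ?ler0n ?ler_nat.
set E := scdl_at _ _ _ (2 * i) in even_le *.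
set O := scdl_at _ _ _ (2 * i).+1 in odd_le *.
have [E_max O_max] : E <= Num.max E O /\ O <= Num.max E O by rewrite !le_max !lexx orbT.
lra.
Qed.

Lemma scdl_max_coarsen : scdl_max m (coarsen a) (coarsen b) <= scdl_max (2 * m) a b.
Proof.
rewrite {1}/scdl_max big_nat_cond; apply: bigmax_le => [|i /andP[/andP[_ i_le] _]].
  exact: scdl_max_ge0.
rewrite ltnS leq_eqVlt in i_le; case/orP: i_le => [/eqP ->|lt_im].
  by rewrite scdl_at_last ?scdl_max_ge0 //; exact: coarsen_bounds.
apply: le_trans (scdl_at_coarsen _ lt_im) _.
by rewrite ge_max !scdl_at_le_max //; lia.
Qed.
End CoarsenMonotone.

Lemma scdl_max_2_le a b : (forall j, 0 <= b j <= a j) -> (forall j, a j <= 1) ->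
  scdl_max 2 a b <= 1 / 2.
Proof.
move=> ba a1; rewrite /scdl_max big_nat_cond.
apply: bigmax_le => // i /andP[/andP[_ i_le] _].
move: (ba 0%N) (ba 1%N) (ba 2%N) (a1 0%N) (a1 1%N) (a1 2%N).
move=> /andP[? ?] /andP[? ?] /andP[? ?] ? ? ?.
have le0 (x : R) : x <= 0 -> pos_part x <= 0 by move=> x0; rewrite pos_part_le.
have le_half (x : R) : x <= 1 / 2 -> pos_part x <= 1 / 2.
  by move=> x_le; rewrite pos_part_le.
case: i i_le => [|[|[|//]]] _; rewrite /scdl_at.
- rewrite big_nat1 big_ltn // big_nat1.
  by apply: le_trans (lerD (le_half _ _) (lerD (le0 _ _) (le0 _ _))) _; lra.
- rewrite big_nat_recr // big_nat1 big_nat1.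
  by apply: le_trans (lerD (lerD (le0 _ _) (le0 _ _)) (le_half _ _)) _; lra.
- rewrite big_nat_recr // big_nat_recr // big_nat1 big_geq // addr0.
  by apply: le_trans (lerD (lerD (le0 _ _) (le0 _ _)) (le0 _ _)) _; lra.
Qed.

Lemma wgt_coarsen m j (t : R) : 0 <= t ->
  wgt m j t = coarsen (fun k => wgt (2 * m) k t) j.
Proof.
move=> t0; have wgtE n i : wgt n i t = hat (n%:R * t - i%:R) by [].
case: j => [|j] /=; rewrite !wgtE hat_coarsen.
  rewrite (hat_eq0 (2 * _ + 1)) ?add0r; last first.
    by rewrite subr0 ger0_norm ?lerDr ?addr_ge0 ?mulr_ge0.
  by congr (hat _ + hat _ / 2); rewrite natrM; ring.
by congr (hat _ + (hat _ + hat _) / 2); rewrite -!natr1 !natrM; ring.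
Qed.

Lemma wgt_succ_eq0 n (t : R) : t <= 1 -> wgt n n.+1 t = 0.
Proof.
move=> t1; have nt : n%:R * t <= n%:R by rewrite ler_piMr.
by apply: hat_eq0; rewrite ler_normr -natr1; apply/orP; right; lra.
Qed.
End Coarsen.

Section Expectation.
Context {d : measure_display} {T : measurableType d} {R : realType}.
Variable P : probability T R.

Lemma ExpE (f : T -> R) : Exp P f = Rintegral P setT f.
Proof. by []. Qed.

Lemma integrable_unit (f : T -> R) : measurable_fun setT f ->
  (forall x, 0 <= f x <= 1) -> P.-integrable setT (EFin \o f).
Proof.
move=> mf f01; apply: measurable_bounded_integrable => //.
  by apply: (@le_lt_trans _ _ 1%E); [exact: probability_le1 | exact: ltry].
exists 1; split => // M M1 x _ /=; have /andP[f0 f1] := f01 x.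
by rewrite ger0_norm // (le_trans f1 (ltW M1)).
Qed.

Lemma Exp_coarsen (F : nat -> T -> R) j :
  (forall k, P.-integrable setT (EFin \o F k)) ->
  Exp P (fun x => coarsen (F^~ x) j) = coarsen (fun k => Exp P (F k)) j.
Proof.
move=> intF; have half k : P.-integrable setT (EFin \o (fun x => F k x / 2)).
  exact: (integrableZr measurableT (2^-1) (intF k)).
case: j => [|j] /=; rewrite !ExpE.
  by rewrite RintegralD // RintegralZr.
rewrite RintegralD //; last first.
  by apply: (integrableZr _ _ (integrableD _ (intF _) (intF _))).
by rewrite RintegralZr ?RintegralD //; exact: (integrableD _ (intF _) (intF _)).
Qed.
End Expectation.

Definition wexp {d : measure_display} {T : measurableType d} {R : realType}
  (P : probability T R) (p h : T -> R) (m j : nat) : R :=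
  Exp P (fun x => wgt m j (p x) * h x).

Section WeightedExpectation.
Context {d : measure_display} {T : measurableType d} {R : realType}.
Context {P : probability T R} {p : T -> R}.
Hypotheses (mp : measurable_fun setT p) (p01 : forall x, 0 <= p x <= 1).

Lemma measurable_wgt m j : measurable_fun setT (fun x => wgt m j (p x)).
Proof.
apply: measurable_maxr; last exact: measurable_cst.
apply: measurable_funB; first exact: measurable_cst.
apply: measurableT_comp => //; apply: measurable_funB; last exact: measurable_cst.
by apply: measurable_funM => //; exact: measurable_cst.
Qed.

Lemma integrable_wgt (h : T -> R) m j : measurable_fun setT h ->
  (forall x, 0 <= h x <= 1) ->
  P.-integrable setT (EFin \o (fun x => wgt m j (p x) * h x)).
Proof.
move=> mh h01; apply: integrable_unit.
  by apply: measurable_funM => //; exact: measurable_wgt.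
move=> x; have /andP[h0 h1] := h01 x.
by rewrite mulr_ge0 ?mulr_ile1 //; [exact: hat_ge0 | exact: hat_le1 | exact: hat_ge0].
Qed.

Lemma wexp_coarsen (h : T -> R) m j : measurable_fun setT h ->
  (forall x, 0 <= h x <= 1) ->
  wexp P p h m j = coarsen (wexp P p h (2 * m)) j.
Proof.
move=> mh h01; rewrite /wexp -Exp_coarsen; last by move=> k; exact: integrable_wgt.
rewrite !ExpE; apply: eq_Rintegral => x _.
have /andP[p0 _] := p01 x; rewrite wgt_coarsen //.
by case: j => [|j] /=; ring.
Qed.

Lemma wexp_succ_eq0 (h : T -> R) n : wexp P p h n n.+1 = 0.
Proof.
rewrite /wexp ExpE (eq_Rintegral _ (g := fun=> 0)); last first.
  by move=> x _; have /andP[_ p1] := p01 x; rewrite wgt_succ_eq0 ?mul0r.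
by rewrite Rintegral_cst // mul0r.
Qed.

Lemma wexp_ge0 (h : T -> R) m j : (forall x, 0 <= h x) -> 0 <= wexp P p h m j.
Proof.
by move=> h0; apply: Rintegral_ge0 => x _; rewrite mulr_ge0 //; exact: hat_ge0.
Qed.

Lemma le_wexp (h1 h2 : T -> R) m j :
  measurable_fun setT h1 -> (forall x, 0 <= h1 x <= 1) ->
  measurable_fun setT h2 -> (forall x, 0 <= h2 x <= 1) ->
  (forall x, h1 x <= h2 x) -> wexp P p h1 m j <= wexp P p h2 m j.
Proof.
move=> mh1 h1_01 mh2 h2_01 h12; apply: le_Rintegral => //; try exact: integrable_wgt.
by move=> x _; rewrite ler_wpM2l //; exact: hat_ge0.
Qed.

Lemma wexp1_le1 m j : wexp P p (cst 1) m j <= 1.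
Proof.
have int1 : P.-integrable setT (EFin \o @cst T R 1).
  by apply: integrable_unit => [|x]; [exact: measurable_cst | rewrite ler01 lexx].
rewrite /wexp ExpE (le_trans (le_Rintegral _ _ int1 _)) //.
- by apply: integrable_wgt => [|x]; [exact: measurable_cst | rewrite ler01 lexx].
- by move=> x _; rewrite /= mulr1; exact: hat_le1.
- have P1 : (P : {measure set T -> \bar R}) setT = 1%E := probability_setT P.
  by rewrite Rintegral_cst // P1 mul1r.
Qed.
End WeightedExpectation.

Section Calibration.
Context {d : measure_display} {T : measurableType d} {R : realType}.
Context {P : probability T R} {p y : T -> R}.
Hypotheses (mp : measurable_fun setT p) (my : measurable_fun setT y)
  (p01 : forall x, 0 <= p x <= 1) (y01 : forall x, y x = 0 \/ y x = 1).

Let y_unit x : 0 <= y x <= 1.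
Proof. by case: (y01 x) => ->; rewrite ?lexx ?ler01. Qed.

Let one_unit (x : T) : 0 <= @cst T R 1 x <= 1.
Proof. by rewrite ler01 lexx. Qed.

Lemma pi_wexp m j : pi_ P p m j = wexp P p (cst 1) m j.
Proof. by rewrite /pi_ /wexp !ExpE; apply: eq_Rintegral => x _; rewrite mulr1. Qed.

Lemma wexp_bounds m j : 0 <= wexp P p y m j <= wexp P p (cst 1) m j.
Proof.
rewrite wexp_ge0 => [|x]; last by have /andP[] := y_unit x.
apply: le_wexp => // x.
by case/andP: (y_unit x).
Qed.

Lemma mulr_pi_q m j : pi_ P p m j * q_ P p y m j = wexp P p y m j.
Proof.
rewrite /q_; case: eqP => [pi0|/eqP pi_neq0]; last by rewrite mulrC divfK.
have /andP[B0] := wexp_bounds m j; rewrite -pi_wexp pi0 => B_le0.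
by rewrite mulr0; apply/le_anti; rewrite B0 B_le0.
Qed.

Lemma SCDL_mE m :
  SCDL_m P p y m = scdl_max m (wexp P p (cst 1) m) (wexp P p y m).
Proof.
have pi_ge0 j : 0 <= pi_ P p m j by rewrite pi_wexp wexp_ge0.
apply: eq_bigr => i _; congr (_ + _); apply: eq_bigr => j _.
  by rewrite -pos_partZ // mulrBr mulr_pi_q pi_wexp mulrC.
by rewrite -pos_partZ // mulrBr mulr_pi_q pi_wexp mulrC.
Qed.

Lemma SCDL_m_ge0 m : 0 <= SCDL_m P p y m.
Proof. by rewrite SCDL_mE scdl_max_ge0. Qed.

Lemma SCDL_m_le_double m : (0 < m)%N -> SCDL_m P p y m <= SCDL_m P p y (2 * m).
Proof.
move=> m_gt0; rewrite !SCDL_mE.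
have coarsenE (h : T -> R) : measurable_fun setT h -> (forall x, 0 <= h x <= 1) ->
    wexp P p h m = coarsen (wexp P p h (2 * m)).
  by move=> mh h01; apply/funext => j; exact: wexp_coarsen.
rewrite coarsenE // ?coarsenE //.
by apply: scdl_max_coarsen => //; [exact: wexp_bounds | exact: wexp_succ_eq0].
Qed.

Lemma SCDL_m_2_le : SCDL_m P p y 2 <= 1 / 2.
Proof.
by rewrite SCDL_mE; apply: scdl_max_2_le; [exact: wexp_bounds | exact: wexp1_le1].
Qed.
End Calibration.

Definition dyadic_inf {R : realType} (s : nat -> R) : R :=
  inf [set v : R | exists2 k : nat, (0 < k)%N & v = Num.max (s k) (1 / (2 ^ k)%:R)].

Lemma pow2_inv_le {R : realType} k l : (k <= l)%N -> 1 / (2 ^ l)%:R <= 1 / (2 ^ k)%:R :> R.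
Proof.
by move=> kl; rewrite !div1r lef_pV2 ?posrE ?ltr0n ?expn_gt0 // ler_nat leq_exp2l.
Qed.

Lemma pow2S_div {R : realType} k : 2 / (2 ^ k.+1)%:R = 1 / (2 ^ k)%:R :> R.
Proof. by rewrite expnS natrM; field; rewrite pnatr_eq0 -lt0n expn_gt0. Qed.

Lemma pow2_div_le {R : realType} k l : (k < l)%N -> 2 / (2 ^ l)%:R <= 1 / (2 ^ k)%:R :> R.
Proof. by case: l => [//|l] kl; rewrite pow2S_div pow2_inv_le. Qed.

Section DyadicInfimum.
Context {R : realType}.
Context {s : nat -> R}.
Hypothesis s_ge0 : forall k, 0 <= s k.

Lemma dyadic_inf_le k : (0 < k)%N -> dyadic_inf s <= Num.max (s k) (1 / (2 ^ k)%:R).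
Proof.
move=> k_gt0; apply: ge_inf; last by exists k.
by exists 0 => _ [l _ ->]; rewrite le_max s_ge0.
Qed.

Lemma dyadic_inf_ge v : (forall k, (0 < k)%N -> v <= Num.max (s k) (1 / (2 ^ k)%:R)) ->
  v <= dyadic_inf s.
Proof.
move=> v_le; apply: lb_le_inf => [|_ [k k_gt0 ->]]; last exact: v_le.
by exists (Num.max (s 1%N) (1 / (2 ^ 1)%:R)); exists 1%N.
Qed.

Lemma dyadic_inf_eq0 : (forall k, (0 < k)%N -> s k.+1 < 1 / (2 ^ k)%:R) -> dyadic_inf s = 0.
Proof.
move=> s_lt; apply/le_anti; rewrite dyadic_inf_ge => [|k _]; last by rewrite le_max s_ge0.
have inf_le k : dyadic_inf s <= 1 / (2 ^ k.+1)%:R.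
  apply: le_trans (@dyadic_inf_le k.+2 isT) _.
  by rewrite ge_max (ltW (s_lt _ _)) //= pow2_inv_le.
rewrite andbT leNgt; apply/negP => inf_gt0.
set K := Num.bound (dyadic_inf s)^-1.
have : (dyadic_inf s)^-1 < 2%:R ^+ K.+1 := upper_nthrootP (leqnSn K).
rewrite -natrX -ltf_pV2 ?posrE ?invr_gt0 ?ltr0n ?expn_gt0 //.
by rewrite invrK -div1r ltNge inf_le.
Qed.

Lemma dyadic_inf_at K : (forall k, s k <= s k.+1) -> s 1%N < 1 -> (0 < K)%N ->
  1 / (2 ^ K)%:R <= s K.+1 ->
  (forall k, (0 < k)%N -> (k < K)%N -> s k.+1 < 1 / (2 ^ k)%:R) ->
  [/\ dyadic_inf s = Num.max (s K) (1 / (2 ^ K)%:R),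
      1 / (2 ^ K)%:R <= dyadic_inf s,
      dyadic_inf s < 2 / (2 ^ K)%:R
    & dyadic_inf s <= s K.+1].
Proof.
move=> s_homo s1_lt1 K_gt0 s_cross s_below.
have s_le : {homo s : k l / (k <= l)%N >-> k <= l} := homo_leq lexx le_trans s_homo.
have sK_lt : s K < 2 / (2 ^ K)%:R.
  case: K K_gt0 s_cross s_below => [//|[|k]] _ _ s_below; rewrite pow2S_div.
    by rewrite expn0 divr1.
  exact: s_below.
set M := Num.max (s K) (1 / (2 ^ K)%:R).
have M_lt : M < 2 / (2 ^ K)%:R.
  by rewrite gt_max sK_lt ltr_pM2r ?invr_gt0 ?ltr0n ?expn_gt0 ?ltr1n.
have M_le : M <= s K.+1 by rewrite ge_max s_cross andbT.
have inf_eq : dyadic_inf s = M.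
  apply/le_anti; rewrite dyadic_inf_le //= dyadic_inf_ge // => k k_gt0.
  case: (ltngtP k K) => [kK|Kk|->//]; last by rewrite le_max (le_trans M_le) ?s_le.
  rewrite le_max; apply/orP; right; apply/ltW/(lt_le_trans M_lt).
  exact: pow2_div_le.
by rewrite inf_eq M_lt M_le le_max lexx orbT.
Qed.
End DyadicInfimum.

Theorem lemma3p5 (d : measure_display) (T : measurableType d) (R : realType)
  (P : probability T R) (p y : T -> R)
  (mp : measurable_fun setT p) (my : measurable_fun setT y)
  (hp : forall x, 0 <= p x <= 1) (hy : forall x, y x = 0 \/ y x = 1) :
  (mstar_infinite P p y -> SCDL P p y = 0) /\
  (forall m : nat, is_mstar P p y m ->
     [/\ SCDL P p y = Num.max (SCDL_m P p y m) (1 / m%:R),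
         1 / m%:R <= SCDL P p y,
         SCDL P p y < 2 / m%:R
       & SCDL P p y <= SCDL_m P p y (2 * m)%N]).
Proof.
pose s k := SCDL_m P p y (2 ^ k).
have s_ge0 k : 0 <= s k := SCDL_m_ge0 mp my hy _.
have s_homo k : s k <= s k.+1.
  by rewrite /s expnS (SCDL_m_le_double mp my hp hy) ?expn_gt0.
have s1_lt1 : s 1%N < 1.
  rewrite /s expn1 (le_lt_trans (SCDL_m_2_le mp my hy)) //.
  by rewrite ltr_pdivrMr // mul1r ltr1n.
have -> : SCDL P p y = dyadic_inf s by [].
split=> [m_inf | _ [[K K_gt0 ->] [cross below]]].
  by apply: (dyadic_inf_eq0 s_ge0) => k k_gt0; rewrite /s expnS; exact: m_inf.
rewrite -expnS; apply: dyadic_inf_at => // [|k k_gt0 k_lt]; first by rewrite /s expnS.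
by rewrite /s expnS; apply: below; rewrite // ltn_exp2l.
Qed.
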